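(* Let $(G,f)\in\mathcal C$ with $|V(G)|=\aleph_1$. If $P$ is a hereditary property such that $P(G,f)$ holds and $(G,f)$ is not $P$-destructed, then $G$ possesses a perfect $f$-factor.
   Context: A graph is $G=(V,E)$ with $V$ a nonempty set and $E\subseteq\{e\subseteq V:|e|=2\}$. For $F\subseteq E$ and $x\in V$, $d_F(x)$ is the cardinal $|\{e\in F:x\in e\}|$. For $f:V\to$ Cardinals, an $f$-factor of $G$ is $F\subseteq E$ with $d_F(x)\le f(x)$ for all $x$; it is perfect if $d_F(x)=f(x)$ for all $x$; $f^{-1}(\lambda)=\{x\in V:f(x)=\lambda\}$. $\mathcal C$ is the class of all pairs $(G,f)$ with $G=(V,E)$ a graph, $f:V\to$ Cardinals, and $f(x)\le d_E(x)$ for all $x\in V$. A property $P$ is a class of pairs; $P(G,f)$ (also ''$(G,f)$ fulfills $P$'') means that $(G,f)\in\mathcal C$ and $(G,f)$ has property $P$. For $x,y\in V$, $G-\{x,y\}$ denotes $(V,E\setminus\{\{x,y\}\})$, and $f_{x,y}(v)=f(v)-1$ if $v\in\{x,y\}$ and $1\le f(v)<\aleph_0$, $f_{x,y}(v)=f(v)$ otherwise. $P$ is hereditary if for every $(G,f)$ with $P(G,f)$ and every $x\in V(G)$ with $f(x)>0$ there is $y\in V(G)$ with $f(y)>0$, $\{x,y\}\in E(G)$ and $P(G-\{x,y\},f_{x,y})$. Destructions: let $(G,f)\in\mathcal C$, $G=(V,E)$, $|V|=\kappa^+$ for an infinite cardinal $\kappa$. Let $(A_\alpha)_{\alpha<\kappa^+}$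 be an increasing continuous sequence (i.e. $A_\lambda=\bigcup_{\alpha<\lambda}A_\alpha$ for limit $\lambda$) of subsets of $V$ with $|A_\alpha|<\kappa^+$ for all $\alpha$ and $V=\bigcup_{\alpha<\kappa^+}A_\alpha$. For $\alpha<\kappa^+$ put $V_\alpha=(V\setminus A_\alpha)\cup f^{-1}(\kappa^+)$, $E_\alpha=\{\{x,y\}\in E: x\in V_\alpha,\ y\in V\setminus A_\alpha\}$, $G_\alpha=(V_\alpha,E_\alpha)$, $f_\alpha=f\restriction V_\alpha$. For a property $P$, $(A_\alpha)_{\alpha<\kappa^+}$ is a $P$-destruction of $(G,f)$ if $S=\{\alpha<\kappa^+: P(G_\alpha,f_\alpha)\text{ fails}\}$ is stationary in $\kappa^+$; $(G,f)$ is $P$-destructed if some such sequence is a $P$-destruction of $(G,f)$. *)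

From HB Require Import structures.
From mathcomp Require Import all_boot all_order.
From mathcomp Require Import boolp classical_sets functions cardinality.
From Stdlib Require Import Relations Wellfounded.

Set Implicit Arguments. Unset Strict Implicit. Unset Printing Implicit Defensive.

Local Open Scope classical_set_scope.
Local Open Scope card_scope.

(** Cardinals that can occur: f(x) <= d_E(x) <= |V| = aleph_1. *)
Inductive cardv := CFin of nat | CAleph0 | CAleph1.

Definition omega1_order (I : Type) (lt : I -> I -> Prop) : Prop :=
  [/\ (forall a, ~ lt a a),
      (forall a b c, lt a b -> lt b c -> lt a c),
      (forall a b, lt a b \/ a = b \/ lt b a) &
      well_founded lt] /\
  (~ countable [set: I] /\ forall i, countable [set j | lt j i]).

Definition has_card (T : Type) (S : set T) (c : cardv) : Prop :=
  match c with
  | CFin n => S #= `I_n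
  | CAleph0 => S #= [set: nat]
  | CAleph1 => exists (I : Type) (lt : I -> I -> Prop),
                 omega1_order lt /\ S #= [set: I]
  end.

Definition card_le_set (c : cardv) (T : Type) (S : set T) : Prop :=
  exists (U : Type) (W : set U), has_card W c /\ W #<= S.

Definition set_le_card (T : Type) (S : set T) (c : cardv) : Prop :=
  exists (U : Type) (W : set U), has_card W c /\ S #<= W.

Definition is_limit (I : Type) (lt : I -> I -> Prop) (l : I) : Prop :=
  (exists j, lt j l) /\ forall j, lt j l -> exists k, lt j k /\ lt k l.

Definition club (I : Type) (lt : I -> I -> Prop) (C : set I) : Prop :=
  (forall i, exists j, lt i j /\ C j) /\
  (forall l, is_limit lt l ->
     (forall j, lt j l -> exists k, [/\ lt j k, lt k l & C k]) -> C l).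

Definition stationary (I : Type) (lt : I -> I -> Prop) (S : set I) : Prop :=
  forall C, club lt C -> exists a, C a /\ S a.

Section Graphs.
Variable V : Type.

Definition is_graph (Vs : set V) (E : set (set V)) : Prop :=
  Vs !=set0 /\
  forall e, E e -> exists x y, [/\ Vs x, Vs y, x <> y & e = [set x; y]].

Definition deg (F : set (set V)) (x : V) : set (set V) := [set e | F e /\ e x].

Definition inC (Vs : set V) (E : set (set V)) (f : V -> cardv) : Prop :=
  is_graph Vs E /\ forall x, Vs x -> card_le_set (f x) (deg E x).

Definition is_property (P : set V -> set (set V) -> (V -> cardv) -> Prop) :=
  forall Vs E f g, (forall x, Vs x -> f x = g x) -> P Vs E f -> P Vs E g.

Definition holds (P : set V -> set (set V) -> (V -> cardv) -> Prop)
  (Vs : set V) (E : set (set V)) (f : V -> cardv) : Prop :=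
  inC Vs E f /\ P Vs E f.

Definition card_pos (c : cardv) : Prop := c <> CFin 0.

Definition fxy (f : V -> cardv) (x y : V) : V -> cardv :=
  fun v => if `[< v = x \/ v = y >] then
             match f v with CFin n.+1 => CFin n | c => c end
           else f v.

Definition hereditary (P : set V -> set (set V) -> (V -> cardv) -> Prop) :=
  forall Vs E f, holds P Vs E f ->
  forall x, Vs x -> card_pos (f x) ->
  exists y, [/\ Vs y, card_pos (f y), E [set x; y] &
                holds P Vs (E `\ [set x; y]) (fxy f x y)].

Definition f_factor (Vs : set V) (E : set (set V)) (f : V -> cardv)
  (F : set (set V)) : Prop :=
  F `<=` E /\ forall x, Vs x -> set_le_card (deg F x) (f x).

Definition perfect_f_factor (Vs : set V) (E : set (set V)) (f : V -> cardv)
  (F : set (set V)) : Prop :=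
  f_factor Vs E f F /\ forall x, Vs x -> has_card (deg F x) (f x).

(** Destructions, specialised to kappa = aleph_0, kappa^+ = aleph_1
    (the only case with |V| = aleph_1). The sequence is indexed by an
    omega_1-order (I, lt). *)
Definition filtration (Vs : set V) (I : Type) (lt : I -> I -> Prop)
  (A : I -> set V) : Prop :=
  [/\ (forall a, A a `<=` Vs),
      (forall a b, lt a b -> A a `<=` A b),
      (forall l, is_limit lt l -> A l = \bigcup_(a in [set a | lt a l]) A a),
      (forall a, countable (A a)) &
      Vs = \bigcup_(a in [set: I]) A a].

Definition V_alpha (Vs : set V) (f : V -> cardv) (Aa : set V) : set V :=
  (Vs `\` Aa) `|` (Vs `&` [set x | f x = CAleph1]).

Definition E_alpha (Vs : set V) (E : set (set V)) (f : V -> cardv)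
  (Aa : set V) : set (set V) :=
  [set e | E e /\ exists x y,
     [/\ e = [set x; y], V_alpha Vs f Aa x & (Vs `\` Aa) y]].

Definition is_destruction (P : set V -> set (set V) -> (V -> cardv) -> Prop)
  (Vs : set V) (E : set (set V)) (f : V -> cardv)
  (I : Type) (lt : I -> I -> Prop) (A : I -> set V) : Prop :=
  filtration Vs lt A /\
  stationary lt [set a | ~ holds P (V_alpha Vs f (A a)) (E_alpha Vs E f (A a)) f].

Definition destructed (P : set V -> set (set V) -> (V -> cardv) -> Prop)
  (Vs : set V) (E : set (set V)) (f : V -> cardv) : Prop :=
  exists (I : Type) (lt : I -> I -> Prop) (A : I -> set V),
    omega1_order lt /\ is_destruction P Vs E f lt A.

End Graphs.

(* Enumerate V as (e_i)_{i<omega_1} and build a continuous filtration (A_i) by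
   closing, at every stage, under the partners that the hereditary property
   would provide to a greedy edge-picking process started from (G, f) or from
   (G_b, f) for an earlier stage b.  Since (G, f) is not destructed, P(G_a, f) holds for all a
   in some club C, and the club points cut V into countable layers
   A_{c0}, A_{c1} \ A_{c0}, ...  On the layer above a club point g we run the
   greedy process in (G_g, f), visiting every vertex of the layer infinitely
   often: whenever a vertex still has positive demand, hereditarity supplies a
   partner and keeps P true, and the closure property keeps that partner below
   the next club point.  A vertex of finite or countable demand lies in G_g
   only for its own layer, so it gets exactly f(v) edges there; a vertex with
   f(v) = aleph_1 stays in every later G_g and gets a fresh edge in each of the
   uncountably many later layers. *)
From mathcomp Require Import all_boot all_order.
From mathcomp Require Import boolp classical_sets functions cardinality.
From Stdlib Require Import Wellfounded Cantor Lia.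
From mathcomp Require Import zify.

Set Implicit Arguments. Unset Strict Implicit. Unset Printing Implicit Defensive.
Local Open Scope classical_set_scope.
Local Open Scope card_scope.

Lemma countableU T (A B : set T) : countable A -> countable B -> countable (A `|` B).
Proof.
move=> cA cB.
have -> : A `|` B = \bigcup_(b in [set: bool]) (if b then A else B).
  apply/seteqP; split=> x.
    by case=> h; [exists true|exists false].
  by case=> -[] _ h; [left|right].
by apply: bigcup_countable => // -[].
Qed.

Lemma countable_image T U (g : T -> U) (A : set T) : countable A -> countable (g @` A).
Proof. by move=> cA; apply: sub_countable cA; apply: card_image_le. Qed.

Lemma countable_subset T (A B : set T) : A `<=` B -> countable B -> countable A.
Proof. by move=> AB; apply: sub_countable; apply: subset_card_le. Qed.

Lemma countable_Some T (o : option T) : countable [set y | o = Some y].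
Proof.
case: o => [y|]; last by apply: (countable_subset (B := set0)).
by apply: (countable_subset (B := [set y])) (countable1 y) => z [<-].
Qed.

Lemma countable_Forall T (Y : set T) : countable Y -> countable [set s | List.Forall Y s].
Proof.
move=> /countable_injP [g gi]; apply/countable_injP.
exists (fun s => pickle (map g s)) => s1 s2.
rewrite !inE => h1 h2 /(pcan_inj pickleK_inv).
elim: s1 s2 h1 h2 => [|a s1 IH] [|b s2] //= h1 h2 [] hab hs.
inversion h1; inversion h2; subst.
by rewrite (gi a b) ?inE // (IH s2).
Qed.

Lemma Forall_pmap T U (D : set U) (t : T -> option U) (s : seq T) :
  (forall n x, t n = Some x -> D x) -> List.Forall D (pmap t s).
Proof.
move=> h; elim: s => [|a s IH] //=.
by case ha: (t a) => [x|] //=; constructor => //; exact: h ha.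
Qed.

Lemma Forall_subset T (D D' : set T) s : D `<=` D' -> List.Forall D s -> List.Forall D' s.
Proof. by move=> DD; apply: List.Forall_impl. Qed.

Lemma countable_schedule T (D : set T) : countable D ->
  exists t : nat -> option T, (forall n x, t n = Some x -> D x) /\
    (forall v, D v -> forall M, exists n, (M <= n)%N /\ t n = Some v).
Proof.
move=> /countable_injP [g gi].
pose decode i := match pselect (exists v, D v /\ g v = i) with
  | left h => Some (proj1_sig (cid h)) | right _ => None end.
have decodeS i x : decode i = Some x -> D x /\ g x = i.
  by rewrite /decode; case: pselect => // h [<-]; exact: (proj2_sig (cid h)).
exists (fun n => decode (Cantor.of_nat n).1); split; first by move=> n x /decodeS [].
move=> v Dv M; exists (Cantor.to_nat (g v, M)); split.
  by have := Cantor.to_nat_non_decreasing (g v) M; lia.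
rewrite Cantor.cancel_of_to /= /decode.
case: pselect => [h|nh]; last by exfalso; apply: nh; exists v.
by have [Dw gw] := proj2_sig (cid h); congr Some; apply: gi; rewrite ?inE.
Qed.

Section Omega1.
Variables (I : Type) (lt : I -> I -> Prop).
Hypothesis Hlt : omega1_order lt.

Definition leo a b := lt a b \/ a = b.

Lemma lt_irr a : ~ lt a a. Proof. by case: Hlt => -[h _ _ _] _; apply: h. Qed.
Lemma lt_trans a b c : lt a b -> lt b c -> lt a c.
Proof. by case: Hlt => -[_ h _ _] _; apply: h. Qed.
Lemma lt_total a b : lt a b \/ a = b \/ lt b a.
Proof. by case: Hlt => -[_ _ h _] _; apply: h. Qed.
Lemma lt_wf : well_founded lt. Proof. by case: Hlt => -[_ _ _ h] _. Qed.
Lemma uncountable_omega1 : ~ countable [set: I]. Proof. by case: Hlt => _ []. Qed.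
Lemma countable_initial_segment i : countable [set j | lt j i].
Proof. by case: Hlt => _ [_]; apply. Qed.

Lemma lt_asym a b : lt a b -> ~ lt b a.
Proof. by move=> h1 h2; apply: (@lt_irr a); apply: lt_trans h1 h2. Qed.

Lemma not_lt_leo a b : ~ lt a b -> leo b a.
Proof. by move=> h; case: (lt_total a b) => [//|[->|]]; [right|left]. Qed.

Lemma lt_not_leo a b : lt a b -> ~ leo b a.
Proof. by move=> h [h'|e]; [apply: lt_asym h h'|subst; apply: lt_irr h]. Qed.

Lemma countable_bounded (X : set I) : countable X -> exists i, forall x, X x -> lt x i.
Proof.
move=> cX.
pose Y := \bigcup_(x in X) ([set j | lt j x] `|` [set x]).
have cY : countable Y.
  apply: bigcup_countable => // x _.
  by apply: countableU; [apply: countable_initial_segment|apply: countable1].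
have [i Yi] : exists i, ~ Y i.
  apply: contrapT => h; apply: uncountable_omega1; apply: countable_subset cY => i _.
  by apply: contrapT => ?; apply: h; exists i.
exists i => x Xx; case: (lt_total x i) => [//|[e|h]]; exfalso; apply: Yi; exists x => //.
  by right.
by left.
Qed.

Lemma cofinal_not_countable (C : set I) : (forall i, exists j, lt i j /\ C j) -> ~ countable C.
Proof.
move=> hC cC; have [i hi] := countable_bounded cC.
by have [j [ij Cj]] := hC i; exact: lt_asym ij (hi j Cj).
Qed.

Lemma exists_least (S : set I) : (exists s, S s) -> exists m, S m /\ forall s, S s -> leo m s.
Proof.
move=> [s0 Ss0]; elim/(well_founded_ind lt_wf): s0 Ss0 => a IH Sa.
case: (pselect (exists b, S b /\ lt b a)) => [[b [Sb ba]]|nb]; first exact: IH ba Sb.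
by exists a; split => // s Ss; apply: not_lt_leo => sa; apply: nb; exists s.
Qed.

Lemma exists_lub (M : set I) (b : I) : (exists m, M m) -> (forall c, M c -> lt c b) ->
  exists s, (forall c, M c -> leo c s) /\
    (~ M s -> is_limit lt s /\ forall j, lt j s -> exists c, [/\ M c, lt j c & lt c s]).
Proof.
move=> [m Mm] Mb.
pose U := [set u | forall c, M c -> leo c u].
have [s [Us smin]] := exists_least (ex_intro U b (fun c Mc => or_introl (Mb c Mc))).
exists s; split => // nMs.
have below_Ms c : M c -> lt c s.
  by move=> Mc; case: (Us c Mc) => // cs; subst.
have cofinal j : lt j s -> exists c, [/\ M c, lt j c & lt c s].
  move=> js; have [c [Mc ncj]] : exists c, M c /\ ~ leo c j.
    apply: contrapT => hn; apply: (lt_not_leo js); apply: smin => c Mc.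
    by apply: contrapT => ncj; apply: hn; exists c.
  exists c; split => //; last exact: below_Ms.
  by case: (lt_total j c) => [//|[ee|cj]]; exfalso; apply: ncj; [right|left].
split=> //; split; first by exists m; apply: below_Ms.
by move=> j /cofinal [c [_ jc cs]]; exists c.
Qed.

Lemma common_witness_below l (Q1 Q2 : I -> Prop) :
  (forall b b', Q1 b -> lt b b' -> Q1 b') -> (forall b b', Q2 b -> lt b b' -> Q2 b') ->
  (exists b, lt b l /\ Q1 b) -> (exists b, lt b l /\ Q2 b) ->
  exists b, [/\ lt b l, Q1 b & Q2 b].
Proof.
move=> u1 u2 [b1 [l1 q1]] [b2 [l2 q2]].
case: (lt_total b1 b2) => [h|[hh|h]].
- by exists b2; split => //; apply: u1 h.
- by subst; exists b2.
- by exists b1; split => //; apply: u2 h.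
Qed.

End Omega1.

Lemma has_card_aleph1_inj T I (lt : I -> I -> Prop) (S : set T) (h0 : T -> I) :
  omega1_order lt -> ~ countable S -> {in S &, injective h0} -> has_card S CAleph1.
Proof.
move=> Hlt nc h0i.
pose h (j : S) : I := h0 (val j).
have hi : injective h.
  by move=> a b e; apply: val_inj; exact: (h0i _ _ (valP a) (valP b) e).
exists S, (fun a b => lt (h a) (h b)); split; last exact: card_setT_sym.
split; first split.
- by move=> a; exact: (lt_irr Hlt).
- by move=> a b c; exact: (lt_trans Hlt).
- move=> a b; case: (lt_total Hlt (h a) (h b)) => [|[/hi ->|]];
    by [left|right; left|right; right].
- exact: wf_inverse_image (lt_wf Hlt).
split; first by rewrite (eq_countable (card_setT S)).
move=> i; have /countable_injP [k ki] := countable_initial_segment Hlt (h i).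
apply/countable_injP; exists (fun j => k (h j)) => a b; rewrite !inE => ha hb /ki.
by rewrite !inE => /(_ ha hb) /hi.
Qed.

Lemma has_card_aleph1_enum V (Vs : set V) : has_card Vs CAleph1 ->
  exists (I : Type) (lt : I -> I -> Prop) (e : I -> V), [/\ omega1_order lt,
    forall i, Vs (e i) & forall v, Vs v -> exists i, e i = v].
Proof.
move=> [I [lt [Hlt hVI]]]; have /card_bijP [F [G FG GF]] := card_esym hVI.
pose e (i : I) : V := val (F (exist _ i (mem_set (Logic.I : [set: I] i)))).
exists I, lt, e; split => // [i|v Vv]; first exact: set_valP.
pose w : Vs := exist _ v (mem_set Vv); exists (val (G w)); rewrite /e.
have -> : exist _ (val (G w)) (mem_set (Logic.I : [set: I] (val (G w)))) = G w.
  exact: val_inj.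
by rewrite GF.
Qed.

Lemma not_destructed_club V (P : set V -> set (set V) -> (V -> cardv) -> Prop)
  (Vs : set V) (E : set (set V)) (f : V -> cardv) I (lt : I -> I -> Prop) (A : I -> set V) :
  ~ destructed P Vs E f -> omega1_order lt -> filtration Vs lt A ->
  exists C, club lt C /\
    forall a, C a -> holds P (V_alpha Vs f (A a)) (E_alpha Vs E f (A a)) f.
Proof.
move=> hnd Hlt hA; apply: contrapT => hn; apply: hnd; exists I, lt, A; split => //.
split=> // C hC; apply: contrapT => hne; apply: hn; exists C; split => // a Ca.
by apply: contrapT => hna; apply: hne; exists a.
Qed.

Section Greedy.
Variables (V : Type) (P : set V -> set (set V) -> (V -> cardv) -> Prop).

Definition good_partner (Vs : set V) (E : set (set V)) (f : V -> cardv) (x y : V) :=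
  [/\ Vs x, card_pos (f x) & [/\ Vs y, card_pos (f y), E [set x; y] &
      holds P Vs (E `\ [set x; y]) (fxy f x y)]].

Definition partner (Vs : set V) (E : set (set V)) (f : V -> cardv) (x : V) : option V :=
  match pselect (exists y, good_partner Vs E f x y) with
  | left h => Some (proj1_sig (cid h))
  | right _ => None
  end.

Lemma partner_good Vs E f x y : partner Vs E f x = Some y -> good_partner Vs E f x y.
Proof. by rewrite /partner; case: pselect => // h [<-]; exact: (proj2_sig (cid h)). Qed.

Lemma partner_none Vs E f x : partner Vs E f x = None -> ~ exists y, good_partner Vs E f x y.
Proof. by rewrite /partner; case: pselect. Qed.

Definition state := (set (set V) * (V -> cardv))%type.

Definition greedy_step (Vs : set V) (st : state) (x : V) : state :=
  match partner Vs st.1 st.2 x with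
  | Some y => (st.1 `\ [set x; y], fxy st.2 x y)
  | None => st
  end.

Definition greedy_run (Vs : set V) (st : state) (s : seq V) : state :=
  foldl (greedy_step Vs) st s.

Section Process.
Variables (Vs : set V) (st0 : state) (t : nat -> option V).

Definition visited n := pmap t (iota 0 n).
Definition state_at n := greedy_run Vs st0 (visited n).
Definition edge_at n : option (set V) :=
  match t n with
  | Some x => omap (fun y => [set x; y]) (partner Vs (state_at n).1 (state_at n).2 x)
  | None => None
  end.
Definition greedy_edges : set (set V) := [set e | exists n, edge_at n = Some e].

Lemma state_atS n :
  state_at n.+1 = if t n is Some x then greedy_step Vs (state_at n) x else state_at n.
Proof. by rewrite /state_at /greedy_run /visited -addn1 iotaD pmap_cat foldl_cat /=; case: (t n). Qed.

Lemma edge_atP n e : edge_at n = Some e ->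
  exists x y, [/\ t n = Some x, partner Vs (state_at n).1 (state_at n).2 x = Some y,
    e = [set x; y], good_partner Vs (state_at n).1 (state_at n).2 x y &
    state_at n.+1 = ((state_at n).1 `\ e, fxy (state_at n).2 x y)].
Proof.
rewrite /edge_at state_atS; case: (t n) => // x.
case h: partner => [y|] //= [<-]; exists x, y; split => //; first exact: partner_good h.
by rewrite /greedy_step h.
Qed.

Lemma edge_at_None n : edge_at n = None -> state_at n.+1 = state_at n.
Proof.
rewrite /edge_at state_atS; case: (t n) => // x.
by case h: partner => [y|] //= _; rewrite /greedy_step h.
Qed.

Lemma state_at_mono m n : (m <= n)%N -> (state_at n).1 `<=` (state_at m).1.
Proof.
elim: n => [|n IH]; first by rewrite leqn0 => /eqP ->.
rewrite leq_eqVlt => /orP [/eqP -> //|]; rewrite ltnS => /IH h.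
case he: (edge_at n) => [e|]; last by rewrite edge_at_None.
by have [x [y [_ _ _ _ ->]]] := edge_atP he; move=> z /= [/h].
Qed.

Lemma state_at_sub n : (state_at n).1 `<=` st0.1.
Proof. exact: (state_at_mono (leq0n n)). Qed.

Lemma edge_at_available n e : edge_at n = Some e -> (state_at n).1 e.
Proof. by move/edge_atP => [x [y [_ _ -> [_ _ [_ _ h _]] _]]]. Qed.

Lemma edge_at_removed m n e : edge_at m = Some e -> (m < n)%N -> ~ (state_at n).1 e.
Proof.
move=> h mn; have [x [y [_ _ _ _ hs]]] := edge_atP h.
by move=> /(state_at_mono mn); rewrite hs /= => -[_]; apply.
Qed.

Lemma edge_at_inj m n e : edge_at m = Some e -> edge_at n = Some e -> m = n.
Proof.
move=> hm hn; case: (ltngtP m n) => // h; exfalso.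
  exact: edge_at_removed hm h (edge_at_available hn).
exact: edge_at_removed hn h (edge_at_available hm).
Qed.

Hypothesis Hher : hereditary P.
Hypothesis Hst0 : holds P Vs st0.1 st0.2.

Lemma state_at_holds n : holds P Vs (state_at n).1 (state_at n).2.
Proof.
elim: n => [|n IH] //.
case h: (edge_at n) => [e|]; last by rewrite edge_at_None.
by have [x [y [_ _ -> [_ _ [_ _ _ hh]] ->]]] := edge_atP h.
Qed.

Lemma edge_at_Some n x : t n = Some x -> Vs x -> card_pos ((state_at n).2 x) ->
  exists y, edge_at n = Some [set x; y].
Proof.
move=> tn Vx px.
have [y [Vy py Ey hy]] := Hher (state_at_holds n) Vx px.
rewrite /edge_at tn; case h: partner => [y'|] /=; first by exists y'.
by exfalso; apply: (partner_none h); exists y.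
Qed.

Variable v : V.

Definition uses n := exists e, edge_at n = Some e /\ e v.

Fixpoint used_count n :=
  if n is m.+1 then used_count m + (if pselect (uses m) then 1 else 0) else 0.

Lemma used_count_mono m n : (m <= n)%N -> (used_count m <= used_count n)%N.
Proof.
elim: n => [|n IH]; first by rewrite leqn0 => /eqP ->.
rewrite leq_eqVlt => /orP [/eqP -> //|]; rewrite ltnS => /IH h /=.
exact: leq_trans h (leq_addr _ _).
Qed.

Definition cardv_pred (c : cardv) := if c is CFin n.+1 then CFin n else c.

Lemma demand_step n :
  ((state_at n.+1).2 v =
     if pselect (uses n) then cardv_pred ((state_at n).2 v) else (state_at n).2 v)
  /\ (uses n -> card_pos ((state_at n).2 v)).
Proof.
case: pselect => hv.
  have [e [he ev]] := hv.
  have [x [y [_ _ ee [_ px [_ py _ _]] ->]]] := edge_atP he.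
  move: ev; rewrite ee /= => ev.
  rewrite /fxy asboolT //; split; first by case: ((state_at n).2 v) => [[|?]| |].
  by move=> _; case: ev => ->.
case he: (edge_at n) => [e|]; last by rewrite edge_at_None.
have [x [y [_ _ ee _ ->]]] := edge_atP he.
rewrite /= /fxy asboolF; first by split => // hh; exfalso; apply: hv.
move=> hxy; apply: hv; exists e; split => //; rewrite ee /=.
by case: hxy => ->; [left|right].
Qed.

Lemma demand_fin k n : st0.2 v = CFin k ->
  (state_at n).2 v = CFin (k - used_count n) /\ (used_count n <= k)%N.
Proof.
move=> h0; elim: n => [|n [IH1 IH2]]; first by rewrite /= subn0 h0.
have [fs fp] := demand_step n.
rewrite fs /=; case: pselect => hv; last by rewrite addn0.
have := fp hv; rewrite IH1 /card_pos => hp.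
have hlt : (used_count n < k)%N.
  by rewrite ltnNge; apply/negP => hk; apply: hp; rewrite (eqP (_ : k - used_count n == 0)) // subn_eq0.
rewrite addn1; split => //.
rewrite /cardv_pred; case e: (k - used_count n) => [|j]; first by move: hlt; rewrite -subn_gt0 e.
by congr CFin; rewrite subnS e.
Qed.

Lemma demand_inf n c : st0.2 v = c -> c = CAleph0 \/ c = CAleph1 -> (state_at n).2 v = c.
Proof.
move=> h0 hc; elim: n => [|n IH] //=.
have [fs _] := demand_step n.
by rewrite fs IH; case: pselect => //; case: hc => ->.
Qed.

Definition used_before N : set (set V) :=
  [set e | exists m, [/\ (m < N)%N, edge_at m = Some e & e v]].

Lemma used_beforeS N : used_before N.+1 = used_before N `|` [set e | edge_at N = Some e /\ e v].
Proof.
apply/seteqP; split => e.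
  move=> [m [mN hm ev]]; rewrite ltnS leq_eqVlt in mN.
  by case/orP: mN => [/eqP mN|mN]; [subst; right|left; exists m].
by case=> [[m [mN hm ev]]|[he ev]]; [exists m; split => //; apply: ltnW|exists N].
Qed.

Lemma card_used_before N : used_before N #= `I_(used_count N).
Proof.
elim: N => [|N IH].
  have -> : used_before 0 = set0 by apply/seteqP; split => e // [m []].
  by rewrite II0; apply: card_eq00.
rewrite /= used_beforeS; case: pselect => hv.
  have [e [he ev]] := hv.
  rewrite addn1; apply/eq_cardSP; exists e; first by right.
  suff -> : (used_before N `|` [set e | edge_at N = Some e /\ e v]) `\ e = used_before N by [].
  apply/seteqP; split => e'.
    by move=> [[//|[he' _]] ne]; exfalso; apply: ne; move: he'; rewrite he => -[].
  move=> [m [mN hm ev']]; split; first by left; exists m.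
  by move=> /= ee; subst e'; have := edge_at_inj hm he => mNe; rewrite mNe ltnn in mN.
suff -> : [set e | edge_at N = Some e /\ e v] = set0 by rewrite setU0 addn0.
by apply/seteqP; split => // e [he ev]; apply: hv; exists e.
Qed.

Definition visited_infinitely := forall M, exists n, (M <= n)%N /\ t n = Some v.

Hypotheses (Vv : Vs v) (Hvis : visited_infinitely).

Lemma used_count_reaches k j : st0.2 v = CFin k -> (j <= k)%N ->
  exists N, (j <= used_count N)%N.
Proof.
move=> h0; elim: j => [|j IH] hj; first by exists 0.
have [N hN] := IH (ltnW hj).
case: (ltnP j (used_count N)) => hc; first by exists N.
have [n [Nn tn]] := Hvis N.
case: (ltnP j (used_count n)) => hc2; first by exists n.
have cn : used_count n = j.
  by apply/eqP; rewrite eqn_leq hc2 (leq_trans hN (used_count_mono Nn)).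
have [fv _] := demand_fin n h0.
have [y hy] : exists y, edge_at n = Some [set v; y].
  apply: edge_at_Some tn Vv _.
  by rewrite fv cn /card_pos => -[] /eqP; rewrite subn_eq0 leqNgt hj.
exists n.+1 => /=; case: pselect => hv; first by rewrite cn addn1.
by exfalso; apply: hv; exists [set v; y]; split => //=; left.
Qed.

Lemma greedy_deg_fin k : st0.2 v = CFin k -> deg greedy_edges v #= `I_k.
Proof.
move=> h0.
have [N hN] := used_count_reaches h0 (leqnn k).
have cN : used_count N = k by apply/eqP; rewrite eqn_leq hN (demand_fin N h0).2.
suff -> : deg greedy_edges v = used_before N by rewrite -cN; apply: card_used_before.
apply/seteqP; split => e; last by move=> [m [_ hm ev]]; split => //; exists m.
move=> [[n hn] ev]; exists n; split => //.
rewrite ltnNge; apply/negP => Nn.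
have := (demand_fin n.+1 h0).2 => /=; case: pselect => hv; last by move=> _; apply: hv; exists e.
by have := used_count_mono Nn; rewrite cN /=; lia.
Qed.

Lemma greedy_deg_aleph0 : st0.2 v = CAleph0 -> deg greedy_edges v #= [set: nat].
Proof.
move=> h0.
have unb j : exists N, (j <= used_count N)%N.
  elim: j => [|j [N hN]]; first by exists 0.
  have [n [Nn tn]] := Hvis N.
  have [y hy] : exists y, edge_at n = Some [set v; y].
    by apply: edge_at_Some tn Vv _; rewrite (demand_inf n h0) //; left.
  exists n.+1 => /=; case: pselect => hv; last first.
    by exfalso; apply: hv; exists [set v; y]; split => //=; left.
  by rewrite addn1 ltnS (leq_trans hN (used_count_mono Nn)).
apply: eq_card_nat.
  apply: (countable_subset (B := (fun n => odflt set0 (edge_at n)) @` [set: nat])).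
    by move=> e [[n hn] _]; exists n => //; rewrite hn.
  exact: countable_image.
move=> [m hm]; have [N hN] := unb m.+1.
have : used_before N #<= `I_m.
  move: hm; rewrite card_eq_le => /andP [hm _]; apply: card_le_trans hm.
  by apply: subset_card_le => e [n [_ hn ev]]; split => //; exists n.
rewrite (card_le_eql (card_used_before N)) card_le_II => hc.
by move: (leq_trans hN hc); rewrite ltnn.
Qed.

End Process.
End Greedy.

Section Filtration.
Variables (V : Type) (Vs : set V) (E : set (set V)) (f : V -> cardv)
  (P : set V -> set (set V) -> (V -> cardv) -> Prop).

Definition stage_partner (A : set V) (s : seq V) (x : V) : option V :=
  let st := greedy_run P (V_alpha Vs f A) (E_alpha Vs E f A, f) s in
  partner P (V_alpha Vs f A) st.1 st.2 x.

Definition closure_step (S : set (set V)) (Y : set V) : set V :=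
  Y `|` [set y | exists A s x,
           [/\ S A, List.Forall Y s, Y x & stage_partner A s x = Some y]].

Definition partner_closure (S : set (set V)) (X : set V) : set V :=
  \bigcup_(n in [set: nat]) iter n (closure_step S) X.

Lemma iter_closure_step_mono S X m n : (m <= n)%N ->
  iter m (closure_step S) X `<=` iter n (closure_step S) X.
Proof.
elim: n => [|n IH]; first by rewrite leqn0 => /eqP ->.
by rewrite leq_eqVlt => /orP [/eqP -> //|]; rewrite ltnS => /IH h z /h hz /=; left.
Qed.

Lemma partner_closure_sub S X : X `<=` partner_closure S X.
Proof. by move=> z hz; exists 0. Qed.

Lemma Forall_partner_closure S X s : List.Forall (partner_closure S X) s ->
  exists N, List.Forall (iter N (closure_step S) X) s.
Proof.
elim: s => [|a s IH] hs; first by exists 0.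
inversion hs as [|a' s' [m _ hm] hs']; subst; have [N hN] := IH hs'.
exists (maxn N m); constructor; first exact: (iter_closure_step_mono (leq_maxr N m)).
by apply: Forall_subset hN; apply: iter_closure_step_mono; apply: leq_maxl.
Qed.

Lemma partner_closure_closed S X A s x y : S A -> List.Forall (partner_closure S X) s ->
  partner_closure S X x -> stage_partner A s x = Some y -> partner_closure S X y.
Proof.
move=> SA /Forall_partner_closure [N hN] [n _ hx] hp.
exists (maxn N n).+1 => //=; right; exists A, s, x; split => //.
  by apply: Forall_subset hN; apply: iter_closure_step_mono; apply: leq_maxl.
exact: (iter_closure_step_mono (leq_maxr N n)).
Qed.

Lemma partner_closure_min S X (Z : set V) : X `<=` Z ->
  (forall A s x y, S A -> List.Forall Z s -> Z x -> stage_partner A s x = Some y -> Z y) ->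
  partner_closure S X `<=` Z.
Proof.
move=> XZ hZ z [n _]; elim: n z => [|n IH] z //=; first exact: XZ.
case; first exact: IH.
move=> [A [s [x [SA hs hx hp]]]]; apply: hZ hp => //; last exact: IH.
exact: Forall_subset IH hs.
Qed.

Lemma countable_partner_closure S X : countable S -> countable X ->
  countable (partner_closure S X).
Proof.
move=> cS cX; apply: bigcup_countable => // n _.
elim: n => [|n IH] //=; apply: countableU => //.
pose Y := iter n (closure_step S) X.
apply: (countable_subset (B := \bigcup_(A in S)
  \bigcup_(p in [set s | List.Forall Y s] `*` Y) [set y | stage_partner A p.1 p.2 = Some y])).
  by move=> y [A [s [x [SA hs hx hp]]]]; exists A => //; exists (s, x).
apply: bigcup_countable => // A _; apply: bigcup_countable.
  by apply: countableX => //; apply: countable_Forall.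
by move=> p _; apply: countable_Some.
Qed.

Lemma V_alpha_sub A : V_alpha Vs f A `<=` Vs.
Proof. by move=> z [[]|[]]. Qed.

Lemma stage_partner_in A s x y : stage_partner A s x = Some y -> V_alpha Vs f A y.
Proof. by move=> h; have [_ _ []] := partner_good h. Qed.

Lemma partner_closure_Vs S X : X `<=` Vs -> partner_closure S X `<=` Vs.
Proof.
move=> XV; apply: partner_closure_min => // A s x y _ _ _ /stage_partner_in.
exact: V_alpha_sub.
Qed.

Variables (I : Type) (lt : I -> I -> Prop).
Hypothesis Hlt : omega1_order lt.
Variable e : I -> V.
Hypothesis eVs : forall i, Vs (e i).
Hypothesis eonto : forall v, Vs v -> exists i, e i = v.

Definition filt_rec (a : I) (r : forall b, lt b a -> set V) : set V :=
  partner_closure ([set set0] `|` [set B | exists b (p : lt b a), B = r b p])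
                  [set z | exists b (p : lt b a), r b p z \/ z = e b].

Definition filt : I -> set V := Fix (lt_wf Hlt) (fun _ => set V) filt_rec.

Lemma filtE a : filt a = partner_closure
  ([set set0] `|` [set B | exists b, lt b a /\ B = filt b])
  [set z | exists b, lt b a /\ (filt b z \/ z = e b)].
Proof.
rewrite /filt Fix_eq; last first.
  move=> x g h hgh; have -> // : g = h.
  by apply: functional_extensionality_dep => b; apply: functional_extensionality_dep.
rewrite /filt_rec; congr partner_closure; apply/seteqP; split.
- by move=> B [->|[b [p ->]]]; [left|right; exists b].
- by move=> B [->|[b [p ->]]]; [left|right; exists b, p].
- by move=> z [b [p h]]; exists b.
- by move=> z [b [p h]]; exists b, p.
Qed.

Lemma countable_filt a : countable (filt a).
Proof.
elim/(well_founded_ind (lt_wf Hlt)): a => a IH.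
rewrite filtE; apply: countable_partner_closure.
  apply: countableU; first exact: countable1.
  apply: (countable_subset (B := filt @` [set b | lt b a])).
    by move=> B [b [ba ->]]; exists b.
  exact/countable_image/countable_initial_segment.
apply: (countable_subset (B := \bigcup_(b in [set b | lt b a]) (filt b `|` [set e b]))).
  by move=> z [b [ba h]]; exists b.
apply: bigcup_countable; first exact: countable_initial_segment Hlt a.
by move=> b ba; apply: countableU; [apply: IH|apply: countable1].
Qed.

Lemma filt_sub a : filt a `<=` Vs.
Proof.
elim/(well_founded_ind (lt_wf Hlt)): a => a IH.
by rewrite filtE; apply: partner_closure_Vs => z [b [ba [h|->]]]; [apply: (IH b)|].
Qed.

Lemma filt_mono a b : lt b a -> filt b `<=` filt a.
Proof. by move=> ba z hz; rewrite filtE; apply: partner_closure_sub; exists b; split => //; left. Qed.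

Lemma filt_leo a b : leo lt b a -> filt b `<=` filt a.
Proof. by case=> [/filt_mono|->]. Qed.

Lemma filt_enum a b : lt b a -> filt a (e b).
Proof. by move=> ba; rewrite filtE; apply: partner_closure_sub; exists b; split => //; right. Qed.

Lemma filt_partner_closed a A s x y : (A = set0 \/ exists g, lt g a /\ A = filt g) ->
  List.Forall (filt a) s -> filt a x -> stage_partner A s x = Some y -> filt a y.
Proof.
rewrite filtE => hA; apply: partner_closure_closed.
by case: hA => [->|[g [ga ->]]]; [left|right; exists g].
Qed.

Section Limit.
Variable l : I.
Hypothesis hl : is_limit lt l.

Lemma Forall_filt_below s : List.Forall (\bigcup_(a in [set a | lt a l]) filt a) s ->
  exists b, lt b l /\ List.Forall (filt b) s.
Proof.
have [[j jl] _] := hl.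
elim: s => [|a s IH] hs; first by exists j.
inversion hs as [|a' s' [b0 bl0 h0] hs']; subst.
have [b [bl h1 h2]] := common_witness_below Hlt (Q1 := fun b => filt b a)
  (Q2 := fun b => List.Forall (filt b) s) (fun b b' h bb => filt_mono bb h)
  (fun b b' h bb => Forall_subset (filt_mono bb) h)
  (ex_intro _ b0 (conj bl0 h0)) (IH hs').
by exists b; split => //; constructor.
Qed.

Lemma filt_continuous : filt l = \bigcup_(a in [set a | lt a l]) filt a.
Proof.
have [_ lim] := hl.
apply/seteqP; split; last by move=> z [a al hz]; apply: filt_mono al _ hz.
rewrite {1}filtE; apply: partner_closure_min.
  move=> z [b [bl [h|->]]]; first by exists b.
  by have [k [bk kl]] := lim b bl; exists k => //; apply: filt_enum.
move=> A s x y SA /Forall_filt_below [b1 [l1 Fb1]] [b2 l2 xb2] hp.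
have Qup b b' : List.Forall (filt b) s /\ filt b x -> lt b b' ->
    List.Forall (filt b') s /\ filt b' x.
  by move=> [h1 h2] bb; split; [apply: Forall_subset h1; apply: filt_mono|apply: filt_mono h2].
have [b [bl Fb xb]] := common_witness_below Hlt
  (fun b b' h bb => Forall_subset (filt_mono bb) h) (fun b b' h bb => filt_mono bb h)
  (ex_intro _ b1 (conj l1 Fb1)) (ex_intro _ b2 (conj l2 xb2)).
move: hp; case: SA => [->|[g [gl ->]]] hp.
  by exists b => //; apply: (filt_partner_closed (A := set0) _ Fb xb hp); left.
have [k [gk kl]] := lim g gl.
have [b' [bl' gb' [Fb' xb']]] := common_witness_below Hlt (Q1 := lt g)
  (fun b b' h bb => lt_trans Hlt h bb) Qup
  (ex_intro _ k (conj kl gk)) (ex_intro _ b (conj bl (conj Fb xb))).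
by exists b' => //; apply: (filt_partner_closed _ Fb' xb' hp); right; exists g.
Qed.

End Limit.

Lemma filt_cover : Vs = \bigcup_(a in [set: I]) filt a.
Proof.
apply/seteqP; split => [v /eonto [i <-]|v [a _ h]]; last exact: filt_sub h.
have [k hk] := countable_bounded Hlt (countable1 i).
by exists k => //; apply: filt_enum; apply: hk.
Qed.

Lemma filtration_filt : filtration Vs lt filt.
Proof.
split.
- exact: filt_sub.
- by move=> a b ab; apply: filt_mono.
- exact: filt_continuous.
- exact: countable_filt.
- exact: filt_cover.
Qed.

End Filtration.

Section Factor.
Variables (V : Type) (Vs : set V) (E : set (set V)) (f : V -> cardv)
  (P : set V -> set (set V) -> (V -> cardv) -> Prop).
Hypotheses (Hher : hereditary P) (Hhold : holds P Vs E f).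
Variables (I : Type) (lt : I -> I -> Prop) (e : I -> V) (C : set I).
Hypotheses (Hlt : omega1_order lt) (eVs : forall i, Vs (e i))
  (eonto : forall v, Vs v -> exists i, e i = v) (HC : club lt C).

Let A := filt Vs E f P Hlt e.

Hypothesis HCP : forall a, C a -> holds P (V_alpha Vs f (A a)) (E_alpha Vs E f (A a)) f.

Lemma exists_club : exists c, C c.
Proof.
have [[[v Vv] _] _] := Hhold.1; have [i _] := eonto Vv.
by have [j [_ Cj]] := HC.1 i; exists j.
Qed.

Definition first_club : I := proj1_sig (cid (exists_least Hlt exists_club)).

Lemma first_clubP : C first_club /\ forall s, C s -> leo lt first_club s.
Proof. exact: proj2_sig (cid (exists_least Hlt exists_club)). Qed.

Lemma exists_club_above g : exists s, C s /\ lt g s.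
Proof. by have [j [gj Cj]] := HC.1 g; exists j. Qed.

Definition next_club (g : I) : I := proj1_sig (cid (exists_least Hlt (exists_club_above g))).

Lemma next_clubP g :
  (C (next_club g) /\ lt g (next_club g)) /\ forall s, C s /\ lt g s -> leo lt (next_club g) s.
Proof. exact: proj2_sig (cid (exists_least Hlt (exists_club_above g))). Qed.

(* Layers are indexed by [option I]: [None] is A_{c0} and [Some g], for g in C,
   is the slice between A_g and A_{next_club g}. *)
Definition layer_index : set (option I) := [set l | if l is Some g then C g else True].
Definition layer_lo (l : option I) : set V := if l is Some g then A g else set0.
Definition layer_top (l : option I) : I := if l is Some g then next_club g else first_club.
Definition layer_hi (l : option I) : set V := A (layer_top l).

Definition layer_Vs l := V_alpha Vs f (layer_lo l).
Definition layer_start l : state V := (E_alpha Vs E f (layer_lo l), f).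

Lemma V_alpha_set0 : V_alpha Vs f set0 = Vs.
Proof. by apply/seteqP; split => x; [apply: V_alpha_sub|left; split]. Qed.

Lemma E_alpha_set0 : E_alpha Vs E f set0 = E.
Proof.
apply/seteqP; split => e0; first by case.
move=> Ee; split => //.
have [x [y [Vx Vy _ ->]]] := Hhold.1.1.2 e0 Ee.
by exists x, y; rewrite V_alpha_set0; split => //; split.
Qed.

Lemma layer_start_holds l : layer_index l ->
  holds P (layer_Vs l) (layer_start l).1 (layer_start l).2.
Proof.
case: l => [g Cg|_]; first exact: HCP.
by rewrite /layer_Vs /layer_start /= V_alpha_set0 E_alpha_set0.
Qed.

Lemma layer_lo_below l : layer_lo l = set0 \/
  exists g, lt g (layer_top l) /\ layer_lo l = A g.
Proof. by case: l => [g|]; [right; exists g; split => //; case: (next_clubP g) => -[]|left]. Qed.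

Let layer_schedule l := countable_schedule (countable_filt Vs E f P Hlt e (layer_top l)).

Definition schedule l : nat -> option V := proj1_sig (cid (layer_schedule l)).

Lemma schedule_in l n x : schedule l n = Some x -> layer_hi l x.
Proof. exact: (proj2_sig (cid (layer_schedule l))).1. Qed.

Lemma schedule_often l v : layer_hi l v -> visited_infinitely (schedule l) v.
Proof. exact: (proj2_sig (cid (layer_schedule l))).2. Qed.

Definition layer_edges l := greedy_edges P (layer_Vs l) (layer_start l) (schedule l).

Definition factor : set (set V) := \bigcup_(l in layer_index) layer_edges l.

Lemma layer_edgesP l e0 : layer_edges l e0 -> exists x y, [/\ e0 = [set x; y],
  layer_hi l x, layer_hi l y, layer_Vs l x /\ layer_Vs l y & E_alpha Vs E f (layer_lo l) e0].
Proof.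
move=> [n hn].
have [x [y [tn hp ee [Vx _ [Vy _ _ _]] _]]] := edge_atP hn.
exists x, y; split => //; first exact: schedule_in tn.
- apply: (filt_partner_closed (layer_lo_below l) _ (schedule_in tn) hp).
  by apply: Forall_pmap => m z; apply: schedule_in.
- exact: state_at_sub (edge_at_available hn).
Qed.

Lemma factor_sub : factor `<=` E.
Proof. by move=> e0 [l _ /layer_edgesP [x [y [_ _ _ _ []]]]]. Qed.

Lemma last_club_missing v : Vs v -> ~ A first_club v ->
  exists s, [/\ C s, ~ A s v & A (next_club s) v].
Proof.
move=> Vv h0.
pose M := [set c | C c /\ ~ A c v].
have [b Ab] : exists b, A b v.
  by move: Vv; rewrite (filt_cover E f P Hlt eVs eonto) => -[b _ h]; exists b.
have Mb c : M c -> lt c b.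
  move=> [Cc nc]; apply: contrapT => ncb; apply: nc.
  exact: (filt_leo (not_lt_leo Hlt ncb)) Ab.
have [s [Us lub]] := exists_lub Hlt (ex_intro M _ (conj first_clubP.1 h0)) Mb.
have [Cs nAs] : M s.
  apply: contrapT => nMs; have [hls cofinal] := lub nMs.
  have Cs : C s by apply: (HC.2 s hls) => j /cofinal [c [[Cc _] jc cs]]; exists c.
  have : A s v by apply: contrapT => nv; apply: nMs.
  rewrite /A (filt_continuous Vs E f P Hlt e hls) => -[a als Aa].
  have [c [[Cc nc] ac _]] := cofinal a als.
  by apply: nc; apply: filt_mono ac _ Aa.
have [[Cnx snx] _] := next_clubP s.
exists s; split => //; apply: contrapT => nv.
exact: (lt_not_leo Hlt snx) (Us _ (conj Cnx nv)).
Qed.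

Lemma vertex_layer v : Vs v -> exists l, [/\ layer_index l, layer_hi l v, ~ layer_lo l v &
  forall l', layer_index l' -> l' <> l -> ~ layer_hi l' v \/ layer_lo l' v].
Proof.
move=> Vv; case: (pselect (A first_club v)) => h0.
  exists None; split => // -[g|] // Cg _; right.
  exact: (filt_leo (first_clubP.2 g Cg)) h0.
have [s [Cs nAs Anx]] := last_club_missing Vv h0.
exists (Some s); split => // -[g|] Cg ne; last first.
  by left => hv; apply: nAs; exact: (filt_leo (first_clubP.2 s Cs)) hv.
case: (lt_total Hlt g s) => [gs|[gs|sg]]; [left|by subst|right] => /=.
  by move=> hv; apply: nAs; exact: (filt_leo ((next_clubP g).2 s (conj Cs gs))) hv.
exact: (filt_leo ((next_clubP s).2 g (conj Cg sg))) Anx.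
Qed.

(* Outside its own layer, a vertex with f v <> aleph_1 is either absent from
   the top or already removed from G_g, so all its factor edges are local. *)
Lemma deg_factor_layer v : Vs v -> f v <> CAleph1 -> exists l, [/\ layer_index l,
  deg factor v = deg (layer_edges l) v, layer_hi l v & layer_Vs l v].
Proof.
move=> Vv fv; have [l [Ll Hl nLl other]] := vertex_layer Vv.
exists l; split => //; last by left; split.
apply/seteqP; split => e0; last by move=> [h ev]; split => //; exists l.
move=> [[l' Ll' h'] ev]; split => //.
case: (pselect (l' = l)) => [<- //|ne].
have [x [y [ee Hx Hy [Vx Vy] _]]] := layer_edgesP h'.
have [Hv Vv'] : layer_hi l' v /\ layer_Vs l' v by move: ev; rewrite ee => -[] ->.
by exfalso; case: (other l' Ll' ne) => // hs; case: Vv' => -[_ //] [_ /= hf].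
Qed.

Lemma deg_factor_countable v : Vs v -> f v <> CAleph1 -> has_card (deg factor v) (f v).
Proof.
move=> Vv fv; have [l [Ll -> Hl Vl]] := deg_factor_layer Vv fv.
have hs := layer_start_holds Ll; have vis := schedule_often Hl.
move: fv; case hf: (f v) => [k| |] // _.
  exact: (greedy_deg_fin Hher hs Vl vis hf).
exact: (greedy_deg_aleph0 Hher hs Vl vis hf).
Qed.

Section Aleph1.
Variable v : V.
Hypotheses (Vv : Vs v) (fv : f v = CAleph1).

Definition fresh_edge g y :=
  [/\ layer_edges (Some g) [set v; y], ~ A g y & A (next_club g) y].

(* v keeps demand aleph_1 during the whole process, so it is matched as soon as
   it is visited; the partner lies outside A_g because edges of G_g do. *)
Lemma exists_fresh_edge g : C g -> A g v -> exists y, fresh_edge g y.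
Proof.
move=> Cg Av.
have [[_ gnx] _] := next_clubP g.
have [n [_ tn]] := schedule_often (filt_mono gnx Av : layer_hi (Some g) v) 0.
have Vl : layer_Vs (Some g) v by right.
have pv : card_pos ((state_at P (layer_Vs (Some g)) (layer_start (Some g))
                      (schedule (Some g)) n).2 v).
  by rewrite (demand_inf (st0 := layer_start (Some g)) P _ _ n fv) //; right.
have [y hy] := edge_at_Some Hher (layer_start_holds (Cg : layer_index (Some g))) tn Vl pv.
have hv : layer_edges (Some g) [set v; y] by exists n.
have [x' [y' [ee Hx' Hy' _ [_ [x'' [y'' [ee' _ [_ ny'']]]]]]]] := layer_edgesP hv.
exists y; split => //.
  have : [set v; y] y'' by rewrite ee'; right.
  by case=> e1; rewrite e1 in ny'' => //; exfalso; exact: ny'' Av.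
have : [set x'; y'] y by rewrite -ee; right.
by case=> ->.
Qed.

Definition fresh_edge_at g : set V :=
  if pselect (exists y, fresh_edge g y) is left h then [set v; proj1_sig (cid h)] else set0.

Definition clubs_containing := [set g | C g /\ A g v].

Lemma fresh_edge_atP g : clubs_containing g ->
  exists y, fresh_edge_at g = [set v; y] /\ fresh_edge g y.
Proof.
move=> [Cg Av]; rewrite /fresh_edge_at; case: pselect => [h|[]]; last exact: exists_fresh_edge.
by exists (proj1_sig (cid h)); split => //; exact: (proj2_sig (cid h)).
Qed.

Lemma fresh_edge_at_neq g1 g2 : clubs_containing g1 -> clubs_containing g2 -> lt g1 g2 ->
  fresh_edge_at g1 <> fresh_edge_at g2.
Proof.
move=> h1 h2 g12; have [y1 [-> [_ n1 A1]]] := fresh_edge_atP h1.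
have [y2 [-> [_ n2 _]]] := fresh_edge_atP h2.
move=> ee; have : [set v; y2] y1 by rewrite -ee; right.
case=> e1; first by apply: n1; rewrite e1; exact: h1.2.
by apply: n2; rewrite -e1; exact: (filt_leo ((next_clubP g1).2 g2 (conj h2.1 g12))) A1.
Qed.

Lemma fresh_edge_at_inj : {in clubs_containing &, injective fresh_edge_at}.
Proof.
move=> g1 g2; rewrite !inE => h1 h2 ee.
case: (lt_total Hlt g1 g2) => [g12|[//|g21]]; exfalso.
  exact: fresh_edge_at_neq h1 h2 g12 ee.
exact: fresh_edge_at_neq h2 h1 g21 (esym ee).
Qed.

Lemma fresh_edge_at_deg g : clubs_containing g -> deg factor v (fresh_edge_at g).
Proof.
move=> h; have [y [-> [hF _ _]]] := fresh_edge_atP h.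
by split; [exists (Some g) => //; exact: h.1|left].
Qed.

Lemma clubs_containing_uncountable : ~ countable clubs_containing.
Proof.
have [b Ab] : exists b, A b v.
  by move: Vv; rewrite (filt_cover E f P Hlt eVs eonto) => -[b _ h]; exists b.
move=> cC; apply: (cofinal_not_countable Hlt HC.1).
apply: (countable_subset (B := clubs_containing `|` [set g | lt g b])); last first.
  by apply: countableU => //; apply: countable_initial_segment Hlt b.
move=> g Cg; case: (pselect (lt g b)) => gb; first by right.
by left; split => //; exact: (filt_leo (not_lt_leo Hlt gb)) Ab.
Qed.

Lemma deg_factor_uncountable : ~ countable (deg factor v).
Proof.
move=> cd; apply: clubs_containing_uncountable.
rewrite -(eq_countable (inj_card_eq fresh_edge_at_inj)).
by apply: (countable_subset (B := deg factor v)) => // _ [g h <-]; apply: fresh_edge_at_deg.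
Qed.

Definition other_end (e0 : set V) : V :=
  if pselect (exists w, Vs w /\ e0 = [set v; w]) is left h then proj1_sig (cid h) else v.

Lemma other_endP e0 : deg factor v e0 -> Vs (other_end e0) /\ e0 = [set v; other_end e0].
Proof.
move=> [/factor_sub Ee ev]; rewrite /other_end.
case: pselect => [h|[]]; first exact: (proj2_sig (cid h)).
have [x [y [Vx Vy _ ee]]] := Hhold.1.1.2 e0 Ee.
by move: ev; rewrite ee => -[] ->; [exists y|exists x; split => //; exact: setUC].
Qed.

Definition enum_index (w : V) : I :=
  if pselect (exists i, e i = w) is left h then proj1_sig (cid h) else first_club.

Lemma enum_indexK w : Vs w -> e (enum_index w) = w.
Proof.
move=> Vw; rewrite /enum_index; case: pselect => [h|[]]; last exact: eonto.
exact: (proj2_sig (cid h)).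
Qed.

Lemma deg_factor_aleph1 : has_card (deg factor v) CAleph1.
Proof.
apply: (has_card_aleph1_inj (h0 := fun e0 => enum_index (other_end e0)) Hlt deg_factor_uncountable).
move=> e1 e2; rewrite !inE => /other_endP [V1 E1] /other_endP [V2 E2] ee.
by rewrite E1 E2 -(enum_indexK V1) -(enum_indexK V2) ee.
Qed.

End Aleph1.

Lemma perfect_factor : perfect_f_factor Vs E f factor.
Proof.
have hc x : Vs x -> has_card (deg factor x) (f x).
  move=> Vx; case: (pselect (f x = CAleph1)) => fx; last exact: deg_factor_countable.
  by rewrite fx; apply: deg_factor_aleph1.
split => //; split=> [|x Vx]; first exact: factor_sub.
by exists (set V), (deg factor x); split; [apply: hc|apply: card_lexx].
Qed.

End Factor.

Theorem theorem2 (V : Type) (Vs : set V) (E : set (set V)) (f : V -> cardv)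
  (P : set V -> set (set V) -> (V -> cardv) -> Prop) :
  is_property P -> hereditary P ->
  has_card Vs CAleph1 ->
  holds P Vs E f ->
  ~ destructed P Vs E f ->
  exists F : set (set V), perfect_f_factor Vs E f F.
Proof.
move=> _ Hher /has_card_aleph1_enum [I [lt [e [Hlt eVs eonto]]]] Hhold Hnd.
have [C [HC HCP]] := not_destructed_club Hnd Hlt (filtration_filt E f P Hlt eVs eonto).
exact: ex_intro _ _ (perfect_factor Hher Hhold eVs eonto HC HCP).
Qed.
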